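(* Let $\mathcal{G}$ be the cyclic digraph on $n>1$ nodes, with the weights and matrices described in the context. Let $r$ be the largest modulus among the eigenvalues of $M_0=\begin{bmatrix} I-L & 0\\ L & S\end{bmatrix}$ that remain after two copies of the eigenvalue $1$ are removed (eigenvalues counted with algebraic multiplicity). If $$\epsilon\in\Big(0,\ \frac{\sqrt2}{3+\sqrt5}\,(1-r)\Big),$$ then the deterministic algorithm with parameter $\epsilon$ achieves average consensus. Moreover, $$r=\sqrt{1-\tfrac1n+\tfrac1{2n^2}+\tfrac1n\big(1-\tfrac1{2n}\big)\cos\tfrac{2\pi}{n}}.$$
   Context: Setting: the cyclic digraph has $\mathcal{V}=\{1,\dots,n\}$ and $\mathcal{E}=\{(1,2),(2,3),\dots,(n-1,n),(n,1)\}$. An edge $(j,i)$ means that $j$ sends to $i$. Its degree is $d=1$. Weights: $a_{ij}=1/(2n)$ if $(j,i)\in\mathcal{E}$ and $0$ otherwise. Also $b_{ih}=1/n$ if $(i,h)\in\mathcal{E}$ and $0$ otherwise. Matrices: $L=D-A$, where $A=[a_{ij}]$ and $D=\mathrm{diag}(\sum_j a_{ij})$. $S=(I-\tilde D)+B$, where $B=[b_{ih}]^T$ and $\tilde D=\mathrm{diag}(\sum_h b_{ih})$. Also $M=\begin{bmatrix} I-L & \epsilon I\\ L & S-\epsilon I\end{bmatrix}$. Deterministic algorithm: $(x(k+1),s(k+1))^T=M(x(k),s(k))^T$ with $s(0)=0$. Average consensus: for every $x(0)\in\mathbb{R}^n$, $(x(k),s(k))\to(x_a\mathbf{1},0)$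 where $x_a=\mathbf{1}^Tx(0)/n$. *)

From HB Require Import structures.
From mathcomp Require Import all_boot all_order all_algebra.
From mathcomp Require Import all_classical all_reals all_analysis.
From mathcomp Require Import complex.
Set Implicit Arguments. Unset Strict Implicit. Unset Printing Implicit Defensive.
Import Order.TTheory GRing.Theory Num.Theory.
Import numFieldNormedType.Exports.
Local Open Scope classical_set_scope.
Local Open Scope ring_scope.

Section Cyclic.
Variable R : realType.
Variable n : nat.

(* Edge set of the cyclic digraph on nodes 0..n-1 (paper: 1..n):
   (j, i) is an edge iff i = j+1 (mod n), i.e. edges (1,2),...,(n-1,n),(n,1). *)
Definition cyc_edge (j i : 'I_n) : bool := val i == ((val j).+1 %% n)%N.

Definition cycA : 'M[R]_n :=
  \matrix_(i, j) (if cyc_edge j i then (2 * n)%:R^-1 else 0).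
Definition cycD : 'M[R]_n := \matrix_(i, j) ((i == j)%:R * \sum_k cycA i k).
Definition cycL : 'M[R]_n := cycD - cycA.

Definition cycb : 'M[R]_n :=
  \matrix_(i, h) (if cyc_edge i h then n%:R^-1 else 0).
Definition cycB : 'M[R]_n := cycb^T.
Definition cycDt : 'M[R]_n := \matrix_(i, j) ((i == j)%:R * \sum_h cycb i h).
Definition cycS : 'M[R]_n := (1%:M - cycDt) + cycB.

Definition cycM (eps : R) : 'M[R]_(n + n) :=
  block_mx (1%:M - cycL) (eps%:M) cycL (cycS - eps%:M).

Definition cycM0 : 'M[R]_(n + n) := block_mx (1%:M - cycL) 0 cycL cycS.

Definition reduced_charpoly : {poly R} := char_poly cycM0 %/ ('X - 1) ^+ 2.

Definition largest_root_modulus (p : {poly R}) (r : R) : Prop :=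
  (exists2 z : R[i], root (map_poly (real_complex R) p) z & `|z| = real_complex R r) /\
  (forall z : R[i], root (map_poly (real_complex R) p) z -> `|z| <= real_complex R r).

(* State (x(k), s(k)) stacked as a column vector of size n + n. *)
Definition cyc_state (eps : R) (x0 : 'cV[R]_n) (k : nat) : 'cV[R]_(n + n) :=
  iter k (fun z => cycM eps *m z) (col_mx x0 0).

Definition average_consensus (eps : R) : Prop :=
  forall x0 : 'cV[R]_n,
    let xa := (\sum_i x0 i 0) / n%:R in
    forall i : 'I_n,
      ((fun k => usubmx (cyc_state eps x0 k) i 0) @ \oo --> xa) /\
      ((fun k => dsubmx (cyc_state eps x0 k) i 0) @ \oo --> (0 : R)).

End Cyclic.

From HB Require Import structures.
From mathcomp Require Import all_boot all_order all_algebra.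
From mathcomp Require Import all_classical all_reals all_analysis.
From mathcomp Require Import complex.
From mathcomp Require Import ring lra zify.
Import Order.TTheory GRing.Theory Num.Theory.
Set Implicit Arguments. Unset Strict Implicit. Unset Printing Implicit Defensive.
Local Open Scope ring_scope.

(* All blocks of M(eps) are circulant, c I + d P with P the cyclic shift, so the discrete
   Fourier transform at the n-th roots of unity w^m decouples the iteration into 2x2
   systems. At w^0 = 1 the sum of x is invariant and s stays 0. For m <> 0 the mode
   matrix at eps = 0 is lower triangular with eigenvalues al = 1 - a + a w^m and
   2 al - 1, where a = 1/(2n); these are the roots of the reduced characteristic
   polynomial, of modulus at most r, with equality for al at m = 1. The coupling eps
   moves the eigenvalues of a mode by at most 3 eps, and r + 3 eps < 1 because
   3 sqrt 2 < 3 + sqrt 5; hence every mode m <> 0 decays geometrically. *)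

Lemma char_poly_castmx (T : comNzRingType) m k (E : m = k) (A : 'M[T]_m) :
  char_poly (castmx (E, E) A) = char_poly A.
Proof. by case: k / E; rewrite castmx_id. Qed.

Lemma char_poly_trmx (T : comNzRingType) m (A : 'M[T]_m) : char_poly A^T = char_poly A.
Proof.
rewrite /char_poly -det_tr; congr (\det _).
by apply/matrixP => i j; rewrite !mxE eq_sym.
Qed.

Lemma char_poly_lblock (T : comNzRingType) m (A B C : 'M[T]_m) :
  char_poly (block_mx A 0 C B) = char_poly A * char_poly B.
Proof.
rewrite /char_poly /char_poly_mx scalar_mx_block map_block_mx map_mx0.
by rewrite opp_block_mx add_block_mx oppr0 addr0 det_lblock.
Qed.

Section CyclicEdges.
Variable n : nat.

Lemma cyc_edge_pred (j i : 'I_n) : cyc_edge j i = (j == ord_pred i).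
Proof.
rewrite -[cyc_edge j i]/(i == ordS j).
by apply/eqP/eqP => [->|->]; [rewrite ordSK | rewrite ord_predK].
Qed.

Lemma sum_cyc_edge_in (V : nmodType) (f : 'I_n -> V) i :
  \sum_k (if cyc_edge k i then f k else 0) = f (ord_pred i).
Proof. by under eq_bigr do rewrite cyc_edge_pred; rewrite -big_mkcond big_pred1_eq. Qed.

Lemma sum_cyc_edge_out (V : nmodType) (f : 'I_n -> V) i :
  \sum_k (if cyc_edge i k then f k else 0) = f (ordS i).
Proof.
under eq_bigr do rewrite -[cyc_edge i _]/(_ == ordS i).
by rewrite -big_mkcond big_pred1_eq.
Qed.

End CyclicEdges.

Section Circulant.
Variables (T : comNzRingType) (n : nat).

Definition shift_mx : 'M[T]_n := \matrix_(i, j) (cyc_edge j i)%:R.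

Definition circ_mx (c d : T) : 'M[T]_n := c%:M + d *: shift_mx.

Lemma circ_mxE c d i j : circ_mx c d i j = c * (i == j)%:R + d * (cyc_edge j i)%:R.
Proof. by rewrite !mxE !mulr_natr. Qed.

Lemma circ_mx_mul c d (v : 'cV[T]_n) i :
  (circ_mx c d *m v) i 0 = c * v i 0 + d * v (ord_pred i) 0.
Proof.
rewrite mulmxDl mul_scalar_mx -scalemxAl !mxE; congr (_ + d * _).
rewrite -(sum_cyc_edge_in (fun j => v j 0)); apply: eq_bigr => j _.
by rewrite mxE; case: cyc_edge; rewrite ?mul1r ?mul0r.
Qed.

(* The transposed shift is the companion matrix of 'X^n - 1. *)
Lemma char_poly_shift_mx : (0 < n)%N -> char_poly shift_mx = 'X^n - 1.
Proof.
move=> n_gt0; set p : {poly T} := 'X^n - 1.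
have p_monic : p \is monic by rewrite monicXnsubC.
have Ep : (size p).-1 = n by rewrite size_XnsubC.
rewrite -char_poly_trmx -[RHS](companionmxK p_monic) -(char_poly_castmx Ep).
congr char_poly; apply/matrixP => i j; rewrite castmxE !mxE /= Ep.
rewrite coefB coefXn coefC (ltn_eqF (ltn_ord j)) sub0r opprK.
rewrite -[cyc_edge i j]/(nat_of_ord j == (nat_of_ord i).+1 %% n)%N.
have [i_last|i_neq] := eqVneq (i : nat) n.-1.
  by rewrite i_last (prednK n_gt0) modnn; case: eqP.
have i_lt := ltn_ord i.
by rewrite eq_sym modn_small //; lia.
Qed.

End Circulant.

Lemma char_poly_circ_mx (F : fieldType) n (c d : F) : (0 < n)%N -> d != 0 ->
  char_poly (circ_mx n c d) = ('X - c%:P) ^+ n - d%:P ^+ n.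
Proof.
move=> n_gt0 d_neq0; set Y : {poly F} := d^-1%:P * ('X - c%:P).
have dY : d%:P * Y = 'X - c%:P by rewrite /Y mulrA -polyCM divff // mul1r.
(* 'X - c - d P = d (Y - P) *)
have char_poly_mx_circ : char_poly_mx (circ_mx n c d) =
  d%:P *: map_mx (comp_poly Y) (char_poly_mx (shift_mx F n)).
  apply/matrixP => i j; rewrite /char_poly_mx !mxE.
  rewrite rmorphB /= -(mulr_natr 'X) -(mulr_natr c) rmorphM /= comp_polyX.
  rewrite rmorph_nat comp_polyC rmorphD !rmorphM /= !rmorph_nat mulrBr mulrA dY.
  by rewrite /Y; ring.
rewrite /char_poly char_poly_mx_circ detZ det_map_mx -/(char_poly _) char_poly_shift_mx //.
by rewrite rmorphB rmorphXn /= comp_polyX rmorph1 mulrBr mulr1 -exprMn dY.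
Qed.

Section CirculantQuotient.
Variables (F : fieldType) (n : nat) (c d : F).
Hypothesis cd1 : c + d = 1.

(* The cofactor of ('X - 1) in ('X - c)^n - d^n, from the factorization subrXX. *)
Definition circ_quot : {poly F} := \sum_(i < n) ('X - c%:P) ^+ (n.-1 - i) * d%:P ^+ i.

Lemma subXX_circ_quot : ('X - 1) * circ_quot = ('X - c%:P) ^+ n - d%:P ^+ n.
Proof. by rewrite subrXX -addrA -opprD -polyCD cd1. Qed.

Lemma circ_quot1 : (0 < n)%N -> circ_quot.[1] = d ^+ n.-1 *+ n.
Proof.
move=> n_gt0; rewrite horner_sum.
have -> : d ^+ n.-1 *+ n = \sum_(i < n) d ^+ n.-1 by rewrite sumr_const card_ord.
apply: eq_bigr => i _; rewrite hornerM !horner_exp hornerXsubC hornerC.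
by rewrite -cd1 addrC addKr -exprD subnK //; have := ltn_ord i; lia.
Qed.

Lemma char_poly_circ_mx_factor : (0 < n)%N -> d != 0 ->
  char_poly (circ_mx n c d) = ('X - 1) * circ_quot.
Proof. by move=> n_gt0 d_neq0; rewrite char_poly_circ_mx // subXX_circ_quot. Qed.

End CirculantQuotient.

Section ConsensusMatrices.
Variables (R : realType) (n : nat).

Definition cyc_weight : R := (2 * n)%:R^-1.
Local Notation a := cyc_weight.

Lemma cycL_circ : cycL R n = circ_mx n a (- a).
Proof.
apply/matrixP => i j; rewrite circ_mxE !mxE.
under eq_bigr do rewrite mxE.
by rewrite sum_cyc_edge_in /a; case: cyc_edge => /=; ring.
Qed.

Lemma one_sub_cycL_circ : 1%:M - cycL R n = circ_mx n (1 - a) a.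
Proof. by rewrite cycL_circ; apply/matrixP => i j; rewrite !circ_mxE !mxE; ring. Qed.

Hypothesis n_gt1 : (1 < n)%N.

Lemma cyc_weight_gt0 : 0 < a.
Proof. by rewrite invr_gt0 ltr0n muln_gt0 /=; lia. Qed.

Lemma cycS_circ : cycS R n = circ_mx n (1 - 2 * a) (2 * a).
Proof.
have n_inv : n%:R^-1 = 2 * a :> R.
  by rewrite /a natrM invfM mulrA divff ?mul1r.
apply/matrixP => i j; rewrite circ_mxE !mxE.
under eq_bigr do rewrite mxE.
by rewrite sum_cyc_edge_out n_inv; case: cyc_edge => /=; ring.
Qed.

Lemma cycM_circ eps : cycM n eps =
  block_mx (circ_mx n (1 - a) a) (circ_mx n eps 0)
           (circ_mx n a (- a)) (circ_mx n (1 - 2 * a - eps) (2 * a)).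
Proof.
rewrite /cycM one_sub_cycL_circ cycL_circ cycS_circ /circ_mx scale0r addr0.
by rewrite addrAC -raddfB.
Qed.

Lemma char_poly_cycM0 : char_poly (cycM0 R n) =
  ('X - 1) ^+ 2 * (circ_quot n (1 - a) a * circ_quot n (1 - 2 * a) (2 * a)).
Proof.
have a_neq0 : a != 0 by rewrite gt_eqF ?cyc_weight_gt0.
have n_gt0 := ltnW n_gt1.
rewrite /cycM0 one_sub_cycL_circ cycL_circ cycS_circ char_poly_lblock.
rewrite !char_poly_circ_mx_factor ?subrK ?mulf_neq0 ?pnatr_eq0 //.
by rewrite expr2; ring.
Qed.

Lemma reduced_charpolyE : reduced_charpoly R n =
  circ_quot n (1 - a) a * circ_quot n (1 - 2 * a) (2 * a).
Proof.
rewrite /reduced_charpoly char_poly_cycM0 mulrC mulpK //.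
by rewrite expf_neq0 // polyXsubC_eq0.
Qed.

End ConsensusMatrices.

Local Open Scope complex_scope.

(* [Normc.normc] is the modulus on [R[i]] with values in the totally ordered [R]; the
   norm [`|z|] of [R[i]] is its embedding (normC_normc). *)
Section NormC.
Variable R : rcfType.
Implicit Types (x y : R[i]).
Local Notation normc := (@Normc.normc R).

Lemma normc_ge0 x : 0 <= normc x.
Proof. by case: x => a b; rewrite sqrtr_ge0. Qed.

Lemma normc_complex (a b : R) : normc (a +i* b) = Num.sqrt (a ^+ 2 + b ^+ 2).
Proof. by []. Qed.

Lemma normc_real (a : R) : normc a%:C = `|a|.
Proof. by rewrite normc_complex expr0n /= addr0 sqrtr_sqr. Qed.

Lemma normcX x k : normc (x ^+ k) = normc x ^+ k.
Proof.
elim: k => [|k IHk]; first exact: Normc.normc1.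
by rewrite !exprS Normc.normcM IHk.
Qed.

Lemma normc_eq0 x : (normc x == 0) = (x == 0).
Proof. by apply/eqP/eqP => [/Normc.eq0_normc|->]; last exact: Normc.normc0. Qed.

Lemma normc_sum_le (I : Type) (r : seq I) (F : I -> R[i]) :
  normc (\sum_(i <- r) F i) <= \sum_(i <- r) normc (F i).
Proof.
elim: r => [|i r IHr]; first by rewrite !big_nil Normc.normc0.
by rewrite !big_cons; apply: le_trans (le_normcD _ _) (lerD _ IHr).
Qed.

Lemma normC_normc x : `|x| = (normc x)%:C.
Proof. by case: x. Qed.

End NormC.

Section CyclicRoot.
Variables (R : realType) (n : nat).
Hypothesis n_gt1 : (1 < n)%N.

Definition cyc_angle : R := 2 * pi / n%:R.
Local Notation th := cyc_angle.

Definition cyc_root : R[i] := cos th +i* sin th.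
Local Notation om := cyc_root.

Let n_gt0 : 0 < n%:R :> R.
Proof. by rewrite ltr0n; lia. Qed.

Lemma cyc_angle_gt0 : 0 < th.
Proof. by rewrite divr_gt0 // mulr_gt0 // pi_gt0. Qed.

Lemma cyc_angle_mul_n : th * n%:R = pi *+ 2.
Proof. by rewrite mulr2n /th; field; rewrite gt_eqF. Qed.

Lemma mul_cyc_angle_le_pi m : (2 * m <= n)%N -> m%:R * th <= pi.
Proof.
move=> le_2m_n; have : 2 * m%:R <= n%:R :> R by rewrite -natrM ler_nat.
have := cyc_angle_mul_n; have := cyc_angle_gt0; have := pi_gt0 R.
rewrite mulr2n; nra.
Qed.

Lemma cyc_angle_in_0pi m : (2 * m <= n)%N -> m%:R * th \in `[0, pi].
Proof.
move=> le_2m_n; rewrite in_itv /= mul_cyc_angle_le_pi // andbT.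
by rewrite mulr_ge0 ?ler0n ?ltW ?cyc_angle_gt0.
Qed.

Lemma cos_mul_cyc_angle_le_half m : (0 < m)%N -> (2 * m <= n)%N ->
  cos (m%:R * th) <= cos th.
Proof.
move=> m_gt0 le_2m_n; have th_0pi := cyc_angle_in_0pi (m := 1) ltac:(lia).
rewrite mul1r in th_0pi; have [->|m_gt1] := eqVneq m 1; first by rewrite mul1r.
have m_gt1' : 1 < m%:R :> R by rewrite ltr1n; lia.
apply/ltW; rewrite ltr_cos ?cyc_angle_in_0pi //.
by have := cyc_angle_gt0; nra.
Qed.

Lemma cos_mul_cyc_angle_le m : (0 < m < n)%N -> cos (m%:R * th) <= cos th.
Proof.
case/andP => m_gt0 lt_mn; have [le_2m_n|lt_n_2m] := leqP (2 * m) n.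
  exact: cos_mul_cyc_angle_le_half.
have -> : m%:R * th = pi *+ 2 - (n - m)%N%:R * th.
  by rewrite natrB ?(ltnW lt_mn) // mulrBl (mulrC n%:R) cyc_angle_mul_n; ring.
by rewrite addrC cosD2pi cosN cos_mul_cyc_angle_le_half //; lia.
Qed.

Lemma cos_cyc_angle_lt1 : cos th < 1.
Proof.
have th_0pi := cyc_angle_in_0pi (m := 1) ltac:(lia); rewrite mul1r in th_0pi.
rewrite -[X in _ < X]cos0 ltr_cos ?cyc_angle_gt0 //.
by rewrite in_itv /= lexx ltW ?pi_gt0.
Qed.

Lemma cyc_rootX m : om ^+ m = cos (m%:R * th) +i* sin (m%:R * th).
Proof.
elim: m => [|m IHm]; first by rewrite mul0r cos0 sin0.
rewrite exprS IHm -addn1 natrD mulrDl mul1r cosD sinD; simpc.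
by congr (_ +i* _); ring.
Qed.

Lemma cyc_rootXn : om ^+ n = 1.
Proof. by rewrite cyc_rootX (mulrC _ th) cyc_angle_mul_n cos2pi sin2pi. Qed.

Lemma cyc_rootX_neq1 m : (0 < m < n)%N -> om ^+ m != 1.
Proof.
move=> m_range; rewrite cyc_rootX; apply/eqP => -[cos_m1 _].
have := cos_mul_cyc_angle_le m_range; rewrite cos_m1.
by rewrite leNgt cos_cyc_angle_lt1.
Qed.

Lemma cyc_root_prim : n.-primitive_root om.
Proof.
have [m om_m m_dvd_n] := prim_order_exists (ltnW n_gt1) cyc_rootXn.
have m_gt0 := prim_order_gt0 om_m.
have := dvdn_leq (ltnW n_gt1) m_dvd_n; rewrite leq_eqVlt => /orP[/eqP <- //|lt_mn].
by have := cyc_rootX_neq1 (m := m); rewrite m_gt0 lt_mn prim_expr_order // eqxx => /(_ isT).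
Qed.

End CyclicRoot.

Lemma normc_cyc_rootX (R : realType) n m : Normc.normc (cyc_root R n ^+ m) = 1.
Proof. by rewrite normcX normc_complex cos2Dsin2 sqrtr1 expr1n. Qed.

Section SpectralRadius.
Variables (R : realType) (n : nat).
Hypothesis n_gt1 : (1 < n)%N.
Local Notation a := (cyc_weight R n).
Local Notation th := (cyc_angle R n).
Local Notation om := (cyc_root R n).
Local Notation normc := (@Normc.normc R).

Definition cyc_rate : R := Num.sqrt (1 - n%:R^-1 + (2 * n ^ 2)%:R^-1
  + n%:R^-1 * (1 - (2 * n)%:R^-1) * cos (2 * pi / n%:R)).

Lemma cyc_rateE : cyc_rate = Num.sqrt (1 - 2 * (a * (1 - a)) * (1 - cos th)).
Proof.
rewrite /cyc_rate /cyc_weight /cyc_angle !natrM.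
by congr Num.sqrt; field; rewrite pnatr_eq0; lia.
Qed.

Lemma normc_circ_eigen (c d phi : R) : c + d = 1 ->
  normc (c%:C + d%:C * (cos phi +i* sin phi)) = Num.sqrt (1 - 2 * (c * d) * (1 - cos phi)).
Proof.
move=> cd1; simpc; rewrite normc_complex; congr Num.sqrt.
have cs1 := cos2Dsin2 phi; rewrite -cd1; nra.
Qed.

Lemma cyc_weight_le : a <= 4^-1.
Proof.
have n_ge2 : 2 <= n%:R :> R by rewrite ler_nat.
by rewrite /cyc_weight natrM lef_pV2 ?posrE; lra.
Qed.

Lemma normc_circ_eigen_le (c d : R) m : c + d = 1 -> a * (1 - a) <= c * d ->
  (0 < m < n)%N -> normc (c%:C + d%:C * om ^+ m) <= cyc_rate.
Proof.
move=> cd1 cd_ge m_range; rewrite cyc_rootX normc_circ_eigen // cyc_rateE.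
apply: ler_wsqrtr; have cos_le := cos_mul_cyc_angle_le R n_gt1 m_range.
have cos_lt1 := cos_cyc_angle_lt1 R n_gt1.
have a_gt0 := cyc_weight_gt0 R n_gt1; have a_le := cyc_weight_le.
have : 0 <= (c * d - a * (1 - a)) * (1 - cos (m%:R * th)) by apply: mulr_ge0; lra.
have : 0 <= a * (1 - a) * (cos th - cos (m%:R * th)) by apply: mulr_ge0; nra.
lra.
Qed.

Lemma normc_circ_eigen1 : normc ((1 - a)%:C + a%:C * om) = cyc_rate.
Proof. by rewrite /cyc_root normc_circ_eigen ?subrK // cyc_rateE [(1 - a) * a]mulrC. Qed.

End SpectralRadius.

Section CirculantRoots.
Variables (R : realType) (n : nat).
Hypothesis n_gt1 : (1 < n)%N.
Local Notation om := (cyc_root R n).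
Local Notation toC := (real_complex R).

Variables (c d : R).
Hypotheses (cd1 : c + d = 1) (d_neq0 : d != 0).

Lemma circ_quot_complex z :
  (z - 1) * (map_poly toC (circ_quot n c d)).[z] = (z - c%:C) ^+ n - d%:C ^+ n.
Proof.
have := congr1 (fun p => (map_poly toC p).[z]) (subXX_circ_quot n cd1) => /=.
rewrite !(rmorphM, rmorphB, rmorphXn) /= map_polyX !map_polyC rmorph1 /=.
by rewrite hornerM !hornerE.
Qed.

Lemma root_circ_quot z : root (map_poly toC (circ_quot n c d)) z <->
  exists2 m, (0 < m < n)%N & z = c%:C + d%:C * om ^+ m.
Proof.
have dC_neq0 : d%:C != 0 by rewrite (inj_eq (@complexI _)).
split=> [/rootP z_root|[m m_range ->]].
  have z_neq1 : z != 1.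
    apply/eqP => z1; move: z_root; rewrite z1 -(rmorph1 toC) horner_map /=.
    rewrite circ_quot1 1?ltnW // => -[] /eqP.
    by rewrite mulrn_eq0 expf_eq0 (negPf d_neq0) andbF orbF; case: n n_gt1.
  have w_unity : ((z - c%:C) / d%:C) ^+ n = 1.
    have /eqP := circ_quot_complex z; rewrite z_root mulr0 eq_sym subr_eq0 => /eqP.
    by rewrite exprMn exprVn => ->; rewrite divff // expf_neq0.
  have [m om_m] := prim_rootP (cyc_root_prim R n_gt1) w_unity.
  exists m; last by rewrite -om_m mulrC divfK // addrC subrK.
  rewrite ltn_ord andbT lt0n; apply: contra_neq z_neq1 => m0.
  move: om_m; rewrite m0 expr0 => /(canRL (divfK dC_neq0)) /eqP; rewrite mul1r subr_eq.
  by move=> /eqP ->; rewrite -rmorphD addrC cd1 rmorph1.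
apply/rootP; apply: (mulfI (x := c%:C + d%:C * om ^+ m - 1)).
  have -> : c%:C + d%:C * om ^+ m - 1 = d%:C * (om ^+ m - 1).
    have -> : c%:C = 1 - d%:C by rewrite -[c](addrK d) cd1 rmorphB rmorph1.
    by move: (om ^+ m) => w; ring.
  by rewrite mulf_neq0 // subr_eq0 cyc_rootX_neq1.
rewrite mulr0 circ_quot_complex addrAC subrr add0r exprMn -exprM mulnC exprM.
by rewrite (cyc_rootXn R n_gt1) expr1n mulr1 subrr.
Qed.

End CirculantRoots.

Lemma largest_root_modulus_reduced (R : realType) n : (1 < n)%N ->
  largest_root_modulus (reduced_charpoly R n) (cyc_rate R n).
Proof.
move=> n_gt1; have a_gt0 := cyc_weight_gt0 R n_gt1.
have a_le := cyc_weight_le R n_gt1; set a := cyc_weight R n in a_gt0 a_le *.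
have a_neq0 : a != 0 by rewrite gt_eqF.
have a2_neq0 : 2 * a != 0 by rewrite mulf_neq0 ?pnatr_eq0.
have root1 := root_circ_quot n_gt1 (subrK a 1) a_neq0.
have root2 := root_circ_quot n_gt1 (subrK (2 * a) 1) a2_neq0.
rewrite /largest_root_modulus reduced_charpolyE // rmorphM; split.
  exists ((1 - a)%:C + a%:C * cyc_root R n).
    by rewrite rootM; apply/orP; left; apply/root1; exists 1%N; rewrite ?expr1.
  by rewrite normC_normc normc_circ_eigen1.
move=> z; rewrite rootM normC_normc lecR => /orP[/root1|/root2] [m m_range ->].
  by rewrite normc_circ_eigen_le ?subrK // mulrC.
have a_le2a : a * (1 - a) <= (1 - 2 * a) * (2 * a) by nra.
by rewrite normc_circ_eigen_le ?subrK.
Qed.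

Lemma factor_le_of_mul_le (R : realFieldType) (x y D e : R) :
  0 < D -> 0 <= x -> 0 <= y -> 0 <= e ->
  x * y <= e * (x + D) -> D <= x + y -> x <= 3 * e \/ y <= 3 * e.
Proof.
move=> D_gt0 x_ge0 y_ge0 e_ge0 xy_le D_le.
have [x_small|x_big] := leP (2 * x) D; [left | right].
  have : x * (D / 2) <= x * y by rewrite ler_wpM2l //; lra.
  have : e * (x + D) <= e * (3 * D / 2) by rewrite ler_wpM2l //; lra.
  by move=> *; rewrite -(ler_pM2r D_gt0); lra.
have : e * (x + D) <= e * (3 * x) by rewrite ler_wpM2l //; lra.
by move=> ?; rewrite -(ler_pM2r (_ : 0 < x)); lra.
Qed.

Lemma le_geometric_of_rec (R : realFieldType) (f : nat -> R) (rho q E : R) :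
  0 <= rho -> rho < q -> 0 <= E -> (forall k, f k.+1 <= rho * f k + E * q ^+ k) ->
  exists K, forall k, f k <= K * q ^+ k.
Proof.
move=> rho_ge0 rho_lt_q E_ge0 f_rec; have q_gt0 : 0 < q by lra.
exists (`|f 0%N| + E / (q - rho)); elim=> [|k IHk].
  by rewrite expr0 mulr1 ler_wpDr ?ler_norm // divr_ge0 // subr_ge0 ltW.
apply: le_trans (f_rec k) _; rewrite exprS.
have qk_ge0 : 0 <= q ^+ k by rewrite exprn_ge0 ?ltW.
set K := _ + _ in IHk *.
have EK : E <= K * (q - rho).
  rewrite /K mulrDl divfK ?gt_eqF ?subr_gt0 // lerDr mulr_ge0 ?normr_ge0 //.
  by rewrite subr_ge0 ltW.
have : rho * f k <= rho * (K * q ^+ k) by rewrite ler_wpM2l.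
have : E * q ^+ k <= K * (q - rho) * q ^+ k by rewrite ler_wpM2r.
have -> : K * (q * q ^+ k) = rho * (K * q ^+ k) + K * (q - rho) * q ^+ k by ring.
lra.
Qed.

Section PerturbedModes.
Variable R : rcfType.
Local Notation normc := (@Normc.normc R).

Lemma linrec2_normc_le (u : nat -> R[i]) (l1 l2 : R[i]) (rho q : R) :
  0 <= rho -> rho < q -> normc l1 <= rho -> normc l2 <= rho ->
  (forall k, u k.+2 = (l1 + l2) * u k.+1 - l1 * l2 * u k) ->
  exists K, forall k, normc (u k) <= K * q ^+ k.
Proof.
move=> rho_ge0 rho_lt_q l1_le l2_le u_rec.
set E := normc (u 1%N - l2 * u 0%N).
have w_le k : normc (u k.+1 - l2 * u k) <= E * rho ^+ k.
  elim: k => [|k IHk]; first by rewrite expr0 mulr1.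
  have -> : u k.+2 - l2 * u k.+1 = l1 * (u k.+1 - l2 * u k) by rewrite u_rec; ring.
  by rewrite Normc.normcM exprS mulrCA ler_pM ?normc_ge0.
apply: (@le_geometric_of_rec _ (fun k => normc (u k)) rho q E) => //; first exact: normc_ge0.
move=> k; have -> : u k.+1 = l2 * u k + (u k.+1 - l2 * u k) by ring.
apply: le_trans (le_normcD _ _) _; rewrite Normc.normcM.
apply: lerD; first by rewrite ler_wpM2r ?normc_ge0.
apply: le_trans (w_le k) _.
by rewrite ler_wpM2l ?normc_ge0 // lerXn2r ?nnegrE ?(ltW rho_lt_q) //; lra.
Qed.

(* With x = |l - al|, y = |l - be| and D = |1 - al| > 0, the equation gives
   x y <= e (x + D) while D <= x + y, so one of x, y is at most 3 e. *)
Lemma perturbed_root_normc_le (al be l : R[i]) (e r : R) : 0 <= e ->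
  normc al <= r -> normc be <= r -> al - be = 1 - al -> 1 - al != 0 ->
  (l - al) * (l - be) + e%:C * (l - 1) = 0 -> normc l <= r + 3 * e.
Proof.
move=> e_ge0 al_le be_le al_be al_neq1 l_root.
set x := normc (l - al); set y := normc (l - be); set D := normc (1 - al).
have D_gt0 : 0 < D by rewrite lt_def normc_ge0 normc_eq0 andbT.
have xy_le : x * y <= e * (x + D).
  have : (l - al) * (l - be) = - (e%:C * (l - 1)) by apply/eqP; rewrite -addr_eq0 l_root.
  move/(congr1 normc); rewrite normcN !Normc.normcM normc_real ger0_norm // => ->.
  rewrite ler_wpM2l // (_ : l - 1 = (l - al) - (1 - al)); last by ring.
  by apply: le_trans (le_normcD _ _) _; rewrite normcN.
have D_le : D <= x + y.
  rewrite /D (_ : 1 - al = (l - be) - (l - al)); last by rewrite -al_be; ring.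
  by apply: le_trans (le_normcD _ _) _; rewrite normcN addrC.
have l_le z : normc z <= r -> normc l <= r + normc (l - z).
  move=> z_le; rewrite {1}(_ : l = z + (l - z)); last by ring.
  by apply: le_trans (le_normcD _ _) _; rewrite lerD2r.
have [x_le|y_le] := factor_le_of_mul_le D_gt0 (normc_ge0 _) (normc_ge0 _) e_ge0 xy_le D_le.
  by apply: le_trans (l_le _ al_le) _; rewrite lerD2l.
by apply: le_trans (l_le _ be_le) _; rewrite lerD2l.
Qed.

Lemma quadratic_splits (t s : R[i]) : exists l1 l2, l1 + l2 = t /\ l1 * l2 = s.
Proof.
set sq := sqrtc (t ^+ 2 - 4 * s).
have two_neq0 : 2 != 0 :> R[i] by rewrite pnatr_eq0.
exists ((t + sq) / 2), ((t - sq) / 2); split; first by field.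
apply: (mulIf (mulf_neq0 two_neq0 two_neq0)).
have -> : (t + sq) / 2 * ((t - sq) / 2) * (2 * 2) = t ^+ 2 - sq ^+ 2 by field.
by rewrite sqr_sqrtc; ring.
Qed.

(* One Fourier mode of the iteration: [al] and [2 al - 1] are the eigenvalues of the
   unperturbed mode matrix, and [e] couples them. *)
Lemma mode_normc_geometric (al : R[i]) (e r q : R) (X S : nat -> R[i]) :
  0 <= e -> normc al <= r -> normc (2 * al - 1) <= r -> 1 - al != 0 -> r + 3 * e < q ->
  (forall k, X k.+1 = al * X k + e%:C * S k) ->
  (forall k, S k.+1 = (1 - al) * X k + (2 * al - 1 - e%:C) * S k) ->
  exists K, forall k, normc (X k) <= K * q ^+ k /\ normc (S k) <= K * q ^+ k.
Proof.
move=> e_ge0 al_le be_le al_neq1 rho_lt_q X_rec S_rec.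
set be := 2 * al - 1 in be_le S_rec.
have [l1 [l2 [l_sum l_prod]]] := quadratic_splits (al + be - e%:C) (al * be - e%:C).
have rho_ge0 : 0 <= r + 3 * e.
  by rewrite addr_ge0 ?mulr_ge0 // (le_trans (normc_ge0 _) al_le).
have l_le l : l = l1 \/ l = l2 -> normc l <= r + 3 * e.
  move=> l_eq; apply: (perturbed_root_normc_le e_ge0 al_le be_le) => //.
    by rewrite /be; ring.
  have : l ^+ 2 - (l1 + l2) * l + l1 * l2 = 0 by case: l_eq => ->; ring.
  by rewrite l_sum l_prod => <-; ring.
have l1_le := l_le _ (or_introl erefl); have l2_le := l_le _ (or_intror erefl).
have [KX KX_le] : exists K, forall k, normc (X k) <= K * q ^+ k.
  apply: (linrec2_normc_le _ rho_lt_q l1_le l2_le) => //.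
  by move=> k; rewrite l_sum l_prod !X_rec S_rec /be; ring.
have [KS KS_le] : exists K, forall k, normc (S k) <= K * q ^+ k.
  apply: (linrec2_normc_le _ rho_lt_q l1_le l2_le) => //.
  by move=> k; rewrite l_sum l_prod !S_rec X_rec /be; ring.
exists (KX + KS) => k; have qk_ge0 : 0 <= q ^+ k by rewrite exprn_ge0 //; lra.
have := KX_le k; have := KS_le k; have := normc_ge0 (X k); have := normc_ge0 (S k).
by rewrite !mulrDl; split; nra.
Qed.

End PerturbedModes.

Lemma sum_expr_unity_eq0 (F : idomainType) n (y : F) :
  y ^+ n = 1 -> y != 1 -> \sum_(m < n) y ^+ m = 0.
Proof.
move=> y_unity y_neq1; have /eqP := subrX1 y n.
by rewrite y_unity subrr eq_sym mulf_eq0 subr_eq0 (negPf y_neq1) => /eqP.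
Qed.

Lemma dvdn_add_sub_ord n (i j : 'I_n) : (n %| j + (n - i))%N = (j == i).
Proof.
have i_lt := ltn_ord i; have j_lt := ltn_ord j.
have [le_ij|lt_ji] := leqP i j.
  rewrite (_ : j + (n - i) = (j - i) + n)%N; last by lia.
  rewrite dvdn_addl // -val_eqE /=; have [->|ne_ji] := eqVneq (j : nat) i.
    by rewrite subnn dvdn0.
  by apply/negbTE/negP => /(dvdn_leq _); lia.
rewrite -val_eqE /= ltn_eqF //; apply/negbTE/negP => /(dvdn_leq _); lia.
Qed.

Section DiscreteFourier.
Variables (R : realType) (n : nat).
Hypothesis n_gt1 : (1 < n)%N.
Local Notation om := (cyc_root R n).

Definition dft (z : R[i]) (v : 'cV[R]_n) : R[i] := \sum_(i < n) (v i 0)%:C * z ^+ i.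

Lemma dftD z (u v : 'cV[R]_n) : dft z (u + v) = dft z u + dft z v.
Proof. by rewrite /dft -big_split; apply: eq_bigr => i _; rewrite mxE rmorphD mulrDl. Qed.

Lemma dft0 z : dft z 0 = 0.
Proof. by rewrite /dft big1 // => i _; rewrite mxE mul0r. Qed.

Lemma dft_circ z c d (v : 'cV[R]_n) : z ^+ n = 1 ->
  dft z (circ_mx n c d *m v) = (c%:C + d%:C * z) * dft z v.
Proof.
move=> z_unity; rewrite /dft; under eq_bigr do rewrite circ_mx_mul rmorphD !rmorphM mulrDl.
rewrite big_split /= mulrDl !mulr_sumr; congr (_ + _).
  by apply: eq_bigr => i _; rewrite mulrA.
rewrite (reindex (@ordS n)); last first.
  by exists (@ord_pred n) => i _; [exact: ordSK | exact: ord_predK].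
by apply: eq_bigr => j _; rewrite ordSK /= (expr_mod _ z_unity) exprS; ring.
Qed.

Lemma sum_cyc_root_expr (i j : 'I_n) :
  \sum_(m < n) (om ^+ m) ^+ j * (om ^+ m) ^+ (n - i) = (j == i)%:R *+ n.
Proof.
under eq_bigr do rewrite -exprD -!exprM mulnC exprM.
have [->|j_neq_i] := eqVneq j i.
  rewrite subnKC ?(ltnW (ltn_ord i)) // cyc_rootXn //.
  by under eq_bigr do rewrite expr1n; rewrite sumr_const card_ord.
rewrite mulr0n mul0rn sum_expr_unity_eq0 //.
  by rewrite -exprM mulnC exprM cyc_rootXn // expr1n.
by rewrite -(prim_order_dvd (cyc_root_prim R n_gt1)) dvdn_add_sub_ord.
Qed.

(* [n - i] stands for [- i] modulo [n]. *)
Lemma dft_inversion (v : 'cV[R]_n) i :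
  (v i 0)%:C * n%:R = \sum_(m < n) dft (om ^+ m) v * (om ^+ m) ^+ (n - i).
Proof.
rewrite /dft; under eq_bigr do rewrite mulr_suml.
rewrite exchange_big /=.
under eq_bigr => j _ do
  rewrite (eq_bigr _ (fun m _ => esym (mulrA _ _ _))) -mulr_sumr sum_cyc_root_expr.
by rewrite (bigD1 i) //= eqxx big1 ?addr0 // => j /negPf ->; rewrite mulr0n mul0rn mulr0.
Qed.

End DiscreteFourier.

Import numFieldNormedType.Exports.
Local Open Scope classical_set_scope.

Lemma cvg_of_dist_le_geometric (R : realType) (f : nat -> R) (l q : R) :
  0 <= q -> q < 1 -> (exists K, forall k, `|f k - l| <= K * q ^+ k) -> f @ \oo --> l.
Proof.
move=> q_ge0 q_lt1 [K f_le].
have geo0 : (fun k => K * q ^+ k) @ \oo --> (0 : R).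
  by have := @cvg_geometric R K q; rewrite ger0_norm // => /(_ q_lt1).
apply: (squeeze_cvgr (f := fun k => l - K * q ^+ k) (h := fun k => l + K * q ^+ k)).
- by apply: nearW => k; have := f_le k; rewrite ler_distl => /andP[-> ->].
- by rewrite -[X in _ --> X]subr0; apply: cvgB => //; exact: cvg_cst.
- by rewrite -[X in _ --> X]addr0; apply: cvgD => //; exact: cvg_cst.
Qed.

Lemma sum_le_scaled (R : realDomainType) (g : nat -> nat -> R) (h : nat -> R) lo hi :
  (forall m, (lo <= m < hi)%N -> exists K, forall k, g m k <= K * h k) ->
  exists K, forall k, \sum_(lo <= m < hi) g m k <= K * h k.
Proof.
elim: hi => [|hi IHhi] g_le; first by exists 0 => k; rewrite big_geq // mul0r.
have [le_lo_hi|lt_hi_lo] := leqP lo hi; last by exists 0 => k; rewrite big_geq // mul0r.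
have [K1 K1_le] := IHhi (fun m m_range => g_le m ltac:(lia)).
have [K2 K2_le] := g_le hi ltac:(lia).
by exists (K1 + K2) => k; rewrite big_nat_recr //= mulrDl lerD.
Qed.

Lemma entry_dist_le_scaled (R : realType) n (v : nat -> 'cV[R]_n) (h : nat -> R) (l : R) i :
  (1 < n)%N -> (forall k, dft 1 (v k) = (l * n%:R)%:C) ->
  (forall m, (0 < m < n)%N ->
     exists K, forall k, Normc.normc (dft (cyc_root R n ^+ m) (v k)) <= K * h k) ->
  exists K, forall k, `|v k i 0 - l| <= K * h k.
Proof.
move=> n_gt1 v_mean v_modes; have [K K_le] := sum_le_scaled v_modes.
have n_gt0 : 0 < n%:R :> R by rewrite ltr0n; lia.
exists (K / n%:R) => k; rewrite -(ler_pM2r n_gt0) mulrAC divfK ?gt_eqF //.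
set F := fun m => dft (cyc_root R n ^+ m) (v k) * (cyc_root R n ^+ m) ^+ (n - i).
have := dft_inversion n_gt1 (v k) i; rewrite -(big_mkord xpredT F) big_ltn; last by lia.
rewrite /F expr0 expr1n mulr1 v_mean -(rmorph_nat (real_complex R)) -rmorphM /=.
move/eqP; rewrite addrC -subr_eq -rmorphB -mulrBl => /eqP/(congr1 (@Normc.normc R)).
rewrite normc_real normrM (ger0_norm (ltW n_gt0)) => ->.
apply: le_trans (K_le k); apply: le_trans (@normc_sum_le R _ _ _) _.
by apply: ler_sum => m _; rewrite Normc.normcM normcX normc_cyc_rootX expr1n mulr1.
Qed.

Section ConsensusDynamics.
Variables (R : realType) (n : nat) (eps : R) (x0 : 'cV[R]_n).
Hypothesis n_gt1 : (1 < n)%N.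
Local Notation a := (cyc_weight R n).
Local Notation om := (cyc_root R n).

Definition cyc_x k := usubmx (cyc_state eps x0 k).
Definition cyc_s k := dsubmx (cyc_state eps x0 k).

Lemma cyc_stateS k : cyc_state eps x0 k.+1 = cycM n eps *m col_mx (cyc_x k) (cyc_s k).
Proof. by rewrite vsubmxK. Qed.

Lemma cyc_xS k : cyc_x k.+1 = circ_mx n (1 - a) a *m cyc_x k + circ_mx n eps 0 *m cyc_s k.
Proof. by rewrite {1}/cyc_x cyc_stateS cycM_circ // mul_block_col col_mxKu. Qed.

Lemma cyc_sS k : cyc_s k.+1 =
  circ_mx n a (- a) *m cyc_x k + circ_mx n (1 - 2 * a - eps) (2 * a) *m cyc_s k.
Proof. by rewrite {1}/cyc_s cyc_stateS cycM_circ // mul_block_col col_mxKd. Qed.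

Lemma dft_cyc_xS z k : z ^+ n = 1 -> dft z (cyc_x k.+1) =
  ((1 - a)%:C + a%:C * z) * dft z (cyc_x k) + eps%:C * dft z (cyc_s k).
Proof. by move=> z_unity; rewrite cyc_xS dftD !dft_circ // rmorph0 mul0r addr0. Qed.

Lemma dft_cyc_sS z k : z ^+ n = 1 -> dft z (cyc_s k.+1) =
  (a%:C + (- a)%:C * z) * dft z (cyc_x k)
  + ((1 - 2 * a - eps)%:C + (2 * a)%:C * z) * dft z (cyc_s k).
Proof. by move=> z_unity; rewrite cyc_sS dftD !dft_circ. Qed.

Lemma dft1_cyc_state k : dft 1 (cyc_s k) = 0 /\ dft 1 (cyc_x k) = (\sum_i x0 i 0)%:C.
Proof.
elim: k => [|k [s_k x_k]].
  rewrite /cyc_x /cyc_s /cyc_state /= col_mxKu col_mxKd dft0 rmorph_sum; split=> //.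
  by apply: eq_bigr => i _; rewrite expr1n mulr1.
rewrite dft_cyc_sS ?expr1n // dft_cyc_xS ?expr1n // s_k x_k !mulr0 !addr0 !mulr1.
by rewrite -!rmorphD addrN subrK rmorph0 rmorph1 mul0r mul1r.
Qed.

Hypotheses (eps_ge0 : 0 <= eps) (rate_lt1 : cyc_rate R n + 3 * eps < 1).
Local Notation q := ((1 + (cyc_rate R n + 3 * eps)) / 2).

Lemma dft_cyc_state_geometric m : (0 < m < n)%N -> exists K, forall k,
  Normc.normc (dft (om ^+ m) (cyc_x k)) <= K * q ^+ k /\
  Normc.normc (dft (om ^+ m) (cyc_s k)) <= K * q ^+ k.
Proof.
move=> m_range; have z_unity : (om ^+ m) ^+ n = 1.
  by rewrite -exprM mulnC exprM cyc_rootXn // expr1n.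
set al := (1 - a)%:C + a%:C * om ^+ m.
have be_eq : 2 * al - 1 = (1 - 2 * a)%:C + (2 * a)%:C * om ^+ m.
  by rewrite /al !rmorphB !rmorphM /= rmorph1 rmorph_nat; ring.
have a_gt0 := cyc_weight_gt0 R n_gt1; have a_le := cyc_weight_le R n_gt1.
apply: (@mode_normc_geometric _ al eps (cyc_rate R n)) => //.
- by rewrite normc_circ_eigen_le ?subrK // mulrC.
- by rewrite be_eq normc_circ_eigen_le ?subrK //; nra.
- have -> : 1 - al = a%:C * (1 - om ^+ m) by rewrite /al rmorphB rmorph1; ring.
  have aC_neq0 : a%:C != 0 by rewrite (inj_eq (@complexI _)) gt_eqF.
  by rewrite mulf_neq0 // subr_eq0 eq_sym cyc_rootX_neq1.
- by move: rate_lt1; set y := cyc_rate R n + 3 * eps; lra.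
- by move=> k; rewrite dft_cyc_xS.
move=> k; rewrite dft_cyc_sS // be_eq; congr (_ * _ + _ * _).
  by rewrite /al rmorphB rmorph1 rmorphN; ring.
by rewrite !rmorphB /=; ring.
Qed.

Lemma rate_factor_bounds : 0 <= q /\ q < 1.
Proof.
have : 0 <= cyc_rate R n + 3 * eps by rewrite addr_ge0 ?mulr_ge0 ?sqrtr_ge0.
by move: rate_lt1; set y := cyc_rate R n + 3 * eps => *; split; lra.
Qed.

Lemma cyc_x_cvg i : (fun k => cyc_x k i 0) @ \oo --> (\sum_j x0 j 0) / n%:R.
Proof.
have [q_ge0 q_lt1] := rate_factor_bounds.
apply: (cvg_of_dist_le_geometric q_ge0 q_lt1).
apply: (@entry_dist_le_scaled R n cyc_x (fun k => q ^+ k)) => // [k|m m_range].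
  rewrite (proj2 (dft1_cyc_state k)) divfK // pnatr_eq0; lia.
by have [K K_le] := dft_cyc_state_geometric m_range; exists K => k; case: (K_le k).
Qed.

Lemma cyc_s_cvg i : (fun k => cyc_s k i 0) @ \oo --> (0 : R).
Proof.
have [q_ge0 q_lt1] := rate_factor_bounds.
apply: (cvg_of_dist_le_geometric q_ge0 q_lt1).
apply: (@entry_dist_le_scaled R n cyc_s (fun k => q ^+ k) 0) => // [k|m m_range].
  by rewrite (proj1 (dft1_cyc_state k)) mul0r.
by have [K K_le] := dft_cyc_state_geometric m_range; exists K => k; case: (K_le k).
Qed.

End ConsensusDynamics.

Lemma average_consensus_of_rate (R : realType) n (eps : R) : (1 < n)%N ->
  0 <= eps -> cyc_rate R n + 3 * eps < 1 -> average_consensus n eps.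
Proof.
move=> n_gt1 eps_ge0 rate_lt1 x0 xa i.
by split; [exact: cyc_x_cvg | exact: cyc_s_cvg].
Qed.

Lemma mul3_sqrt2_div_lt1 (R : rcfType) : 3 * (Num.sqrt 2 / (3 + Num.sqrt 5)) < 1 :> R.
Proof.
have sqrt2_sq : Num.sqrt 2 ^+ 2 = 2 :> R by rewrite sqr_sqrtr ?ler0n.
have sqrt5_sq : Num.sqrt 5 ^+ 2 = 5 :> R by rewrite sqr_sqrtr ?ler0n.
have := sqrtr_ge0 (2 : R); have := sqrtr_ge0 (5 : R).
move: sqrt2_sq sqrt5_sq; set s := Num.sqrt 2; set t := Num.sqrt 5 => s_sq t_sq t_ge0 s_ge0.
have s_lt : s < 3 / 2 by nra.
have t_gt : 2 < t by nra.
by rewrite mulrA ltr_pdivrMr; lra.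
Qed.

Lemma add_mul3_lt1 (R : realFieldType) (r c eps : R) : 0 <= c -> 3 * c < 1 ->
  0 < eps -> eps < c * (1 - r) -> r + 3 * eps < 1.
Proof.
move=> c_ge0 c_lt eps_gt0 eps_lt; have r_lt1 : r < 1 by nra.
have : 3 * c * (1 - r) < 1 - r by rewrite -[X in _ < X]mul1r ltr_pM2r ?subr_gt0.
nra.
Qed.

Theorem proposition5 (R : realType) (n : nat) : (1 < n)%N ->
  let r : R := Num.sqrt (1 - n%:R^-1 + (2 * n ^ 2)%:R^-1
                 + n%:R^-1 * (1 - (2 * n)%:R^-1) * cos (2 * pi / n%:R)) in
  (('X - 1) ^+ 2 %| char_poly (cycM0 R n))%R /\
  largest_root_modulus (reduced_charpoly R n) r /\
  (forall eps : R, 0 < eps -> eps < Num.sqrt 2 / (3 + Num.sqrt 5) * (1 - r) ->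
     average_consensus n eps).
Proof.
move=> n_gt1 r; split; first by rewrite char_poly_cycM0 // dvdp_mulIl.
split; first exact: largest_root_modulus_reduced.
move=> eps eps_gt0 eps_lt; apply: average_consensus_of_rate => //; first exact: ltW.
apply: add_mul3_lt1 eps_gt0 eps_lt; last exact: mul3_sqrt2_div_lt1.
by rewrite divr_ge0 ?addr_ge0 ?sqrtr_ge0.
Qed.
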